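(* In the setting where $X_N\in\mathbb{R}^{N\times M}$ (rows $x_n^\top$), $Y_N\in\mathbb{R}^N$, $x\in\mathbb{R}^M$, $\lambda>0$, $\sigma>0$, $w(\theta)=\exp\{-\frac{\lambda}{2\sigma^2}\|\theta\|^2\}$, $P_\lambda=(X_N^\top X_N+\lambda I)^{-1}$, $K_\lambda=1+x^\top P_\lambda x$, $\hat\theta_\lambda=P_\lambda X_N^\top Y_N$, and $\hat\theta_y=\arg\min_\theta\big[\sum_{n}(y_n-\theta^\top x_n)^2+(y-\theta^\top x)^2+\lambda\|\theta\|^2\big]$, the LpNML distribution $$q_{\mathrm{LpNML}}(y\mid x)=\frac{p_{\hat\theta_y}(y\mid x)\,w(\hat\theta_y)}{\int_{\mathbb{R}}p_{\hat\theta_{y'}}(y'\mid x)\,w(\hat\theta_{y'})\,dy'}$$ is the Gaussian $\mathcal{N}\big(\hat\theta_\lambda^\top x-\hat\mu,\ \hat\sigma^2\big)$, where $$\hat\mu=\frac{\lambda K_\lambda\,\hat\theta_\lambda^\top P_\lambda x}{1+\lambda x^\top P_\lambda^2x},\qquad \hat\sigma^2=\frac{\sigma^2K_\lambda^2}{1+\lambda x^\top P_\lambda^2x}.$$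
   Context: $p_\theta(y\mid x)=\frac{1}{\sqrt{2\pi\sigma^2}}\exp\{-\frac{1}{2\sigma^2}(y-\theta^\top x)^2\}$. *)

From HB Require Import structures.
From mathcomp Require Import all_boot all_order all_algebra.
From mathcomp Require Import all_classical all_reals all_analysis.
Set Implicit Arguments. Unset Strict Implicit. Unset Printing Implicit Defensive.
Import Order.TTheory GRing.Theory Num.Theory.
Local Open Scope ring_scope.

Section LpNML.
Variable R : realType.

Definition dotv (M : nat) (u v : 'cV[R]_M) : R := \sum_(i < M) u i 0 * v i 0.

Definition gauss_pdf (mu s2 y : R) : R :=
  (Num.sqrt (2 * pi * s2))^-1 * expR (- (y - mu) ^+ 2 / (2 * s2)).

Definition p_model (M : nat) (sigma : R) (theta x : 'cV[R]_M) (y : R) : R :=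
  gauss_pdf (dotv theta x) (sigma ^+ 2) y.

Definition wprior (M : nat) (lambda sigma : R) (theta : 'cV[R]_M) : R :=
  expR (- (lambda / (2 * sigma ^+ 2)) * dotv theta theta).

Definition ridge_obj (N M : nat) (X : 'M[R]_(N, M)) (Y : 'cV[R]_N)
  (x : 'cV[R]_M) (lambda y : R) (theta : 'cV[R]_M) : R :=
  \sum_(n < N) (Y n 0 - (X *m theta) n 0) ^+ 2
  + (y - dotv theta x) ^+ 2 + lambda * dotv theta theta.

Definition is_argmin (N M : nat) (X : 'M[R]_(N, M)) (Y : 'cV[R]_N)
  (x : 'cV[R]_M) (lambda y : R) (theta : 'cV[R]_M) : Prop :=
  forall theta', ridge_obj X Y x lambda y theta <= ridge_obj X Y x lambda y theta'.

Definition q_LpNML (M : nat) (sigma lambda : R) (x : 'cV[R]_M)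
  (thy : R -> 'cV[R]_M) (y : R) : R :=
  (p_model sigma (thy y) x y * wprior lambda sigma (thy y)) /
  fine (\int[@lebesgue_measure R]_(y' in [set: R])
          (p_model sigma (thy y') x y' * wprior lambda sigma (thy y'))%:E).

Definition P_lam (N M : nat) (X : 'M[R]_(N, M)) (lambda : R) : 'M[R]_M :=
  invmx (X^T *m X + lambda%:M).

End LpNML.

(* For fixed y the objective is a strictly convex quadratic in theta; its
   stationarity equation A theta = X^T Y + (y - theta^T x) x with
   A = X^T X + lambda I is solved by theta_hat_y = theta_hat_lambda + t(y) P x,
   where t(y) = (y - theta_hat_lambda^T x) / K.  Along this line both the
   likelihood and the prior are exponentials of quadratics in y, so their
   product is a constant times a Gaussian density in y; completing the square
   gives its mean and variance, and normalisation removes the constant. *)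
From HB Require Import structures.
From mathcomp Require Import all_boot all_order all_algebra.
From mathcomp Require Import all_classical all_reals all_analysis.
From mathcomp Require Import ring lra.
Import Order.TTheory GRing.Theory Num.Theory.
Set Implicit Arguments. Unset Strict Implicit. Unset Printing Implicit Defensive.
Local Open Scope ring_scope.

Section DotProduct.
Variable R : realType.
Implicit Types (M : nat).

Lemma dotvE M (u v : 'cV[R]_M) : dotv u v = (u^T *m v) 0 0.
Proof. by rewrite /dotv mxE; apply: eq_bigr => i _; rewrite mxE. Qed.

Lemma dotvC M (u v : 'cV[R]_M) : dotv u v = dotv v u.
Proof. by rewrite /dotv; apply: eq_bigr => i _; rewrite mulrC. Qed.

Lemma dotvDl M (u v w : 'cV[R]_M) : dotv (u + v) w = dotv u w + dotv v w.
Proof. by rewrite /dotv -big_split; apply: eq_bigr => i _; rewrite mxE mulrDl. Qed.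

Lemma dotvDr M (u v w : 'cV[R]_M) : dotv w (u + v) = dotv w u + dotv w v.
Proof. by rewrite dotvC dotvDl !(dotvC _ w). Qed.

Lemma dotvZl M a (u v : 'cV[R]_M) : dotv (a *: u) v = a * dotv u v.
Proof. by rewrite /dotv mulr_sumr; apply: eq_bigr => i _; rewrite mxE mulrA. Qed.

Lemma dotvZr M a (u v : 'cV[R]_M) : dotv v (a *: u) = a * dotv v u.
Proof. by rewrite dotvC dotvZl dotvC. Qed.

Lemma dotvNl M (u v : 'cV[R]_M) : dotv (- u) v = - dotv u v.
Proof. by rewrite -scaleN1r dotvZl mulN1r. Qed.

Lemma dotvBl M (u v w : 'cV[R]_M) : dotv (u - v) w = dotv u w - dotv v w.
Proof. by rewrite dotvDl dotvNl. Qed.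

Lemma dotvBr M (u v w : 'cV[R]_M) : dotv w (u - v) = dotv w u - dotv w v.
Proof. by rewrite !(dotvC w) dotvBl. Qed.

Lemma dotv0l M (u : 'cV[R]_M) : dotv 0 u = 0.
Proof. by rewrite /dotv big1 // => i _; rewrite mxE mul0r. Qed.

Lemma dotv_mulmx M N (A : 'M[R]_(N, M)) u v : dotv (A *m u) v = dotv u (A^T *m v).
Proof. by rewrite !dotvE trmx_mul mulmxA. Qed.

Lemma dotv_ge0 M (u : 'cV[R]_M) : 0 <= dotv u u.
Proof. by rewrite /dotv sumr_ge0 // => i _; rewrite -expr2 sqr_ge0. Qed.

Lemma dotv_eq0 M (u : 'cV[R]_M) : dotv u u = 0 -> u = 0.
Proof.
move=> /eqP; rewrite /dotv psumr_eq0; last by move=> i _; rewrite -expr2 sqr_ge0.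
move=> /allP u2_eq0; apply/matrixP => i j; rewrite (ord1 j) mxE.
by have := u2_eq0 i (mem_index_enum i); rewrite -expr2 sqrf_eq0 => /eqP.
Qed.

Lemma dotv_addZ_sqr M t (u v : 'cV[R]_M) :
  dotv (v + t *: u) (v + t *: u) = dotv v v + 2 * t * dotv v u + t ^+ 2 * dotv u u.
Proof. by rewrite !dotvDl !dotvDr !dotvZl !dotvZr (dotvC u v); ring. Qed.

End DotProduct.

Section RidgeRegression.
Variables (R : realType) (N M : nat) (X : 'M[R]_(N, M)) (Y : 'cV[R]_N).
Variables (x : 'cV[R]_M) (lambda : R).
Hypothesis lambda_gt0 : 0 < lambda.

Local Notation A := (X^T *m X + lambda%:M).
Local Notation P := (P_lam X lambda).

Lemma ridge_mx_tr : A^T = A.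
Proof. by rewrite linearD /= trmx_mul trmxK tr_scalar_mx. Qed.

Lemma dotv_ridge_mx (w : 'cV[R]_M) :
  dotv w (A *m w) = dotv (X *m w) (X *m w) + lambda * dotv w w.
Proof. by rewrite mulmxDl mul_scalar_mx dotvDr dotvZr -mulmxA dotvC dotv_mulmx trmxK. Qed.

Lemma dotv_ridge_mx_eq0 (w : 'cV[R]_M) : dotv w (A *m w) = 0 -> w = 0.
Proof.
rewrite dotv_ridge_mx => quad0; apply: dotv_eq0; apply/eqP.
have := dotv_ge0 (X *m w); have := dotv_ge0 w.
rewrite eq_le => w_ge0 Xw_ge0; rewrite w_ge0 andbT.
by rewrite -(@pmulr_rle0 _ lambda) //; lra.
Qed.

Lemma ridge_mx_unit : A \in unitmx.
Proof.
rewrite -row_free_unit -kermx_eq0; apply/negPn/negP => ker_nz.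
set v := nz_row (kermx A).
have vA : v *m A = 0 by apply/sub_kermxP; exact: nz_row_sub.
have Av : A *m v^T = 0 by rewrite -[A in A *m _]ridge_mx_tr -trmx_mul vA linear0.
have /(congr1 trmx) : v^T = 0 by apply: dotv_ridge_mx_eq0; rewrite Av dotvC dotv0l.
by rewrite trmxK linear0 => /eqP; rewrite nz_row_eq0 (negbTE ker_nz).
Qed.

Lemma ridge_mxKP : A *m P = 1%:M.
Proof. exact: mulmxV ridge_mx_unit. Qed.

Lemma P_lam_tr : P^T = P.
Proof. by rewrite /P_lam trmx_inv ridge_mx_tr. Qed.

Lemma dotv_P_ge0 : 0 <= dotv x (P *m x).
Proof.
rewrite -{1}[x]mul1mx -ridge_mxKP -mulmxA dotvC dotv_ridge_mx.
by rewrite addr_ge0 ?dotv_ge0 // mulr_ge0 ?dotv_ge0 // ltW.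
Qed.

Definition ridge_stationary (y : R) (t : 'cV[R]_M) : Prop :=
  X^T *m (Y - X *m t) + (y - dotv t x) *: x - lambda *: t = 0.

Lemma ridge_obj_shift (y : R) (ts d : 'cV[R]_M) :
  ridge_stationary y ts ->
  ridge_obj X Y x lambda y (ts + d) = ridge_obj X Y x lambda y ts +
    (dotv (X *m d) (X *m d) + dotv d x ^+ 2 + lambda * dotv d d).
Proof.
move=> stationary.
have sumsqE (th : 'cV[R]_M) :
    \sum_(n < N) (Y n 0 - (X *m th) n 0) ^+ 2 = dotv (Y - X *m th) (Y - X *m th).
  by rewrite /dotv; apply: eq_bigr => i _; rewrite !mxE expr2.
rewrite /ridge_obj !sumsqE mulmxDr.
set r := Y - X *m ts.
have cross0 : dotv d (X^T *m r) + (y - dotv ts x) * dotv d x - lambda * dotv d ts = 0.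
  by rewrite -2!dotvZr -dotvDr -dotvBr /r stationary dotvC dotv0l.
have -> : Y - (X *m ts + X *m d) = r - X *m d by rewrite /r opprD addrA.
clearbody r.
rewrite !dotvBl !dotvBr !dotvDl !dotvDr (dotvC r (X *m d)) (dotv_mulmx X d r) (dotvC ts d).
move: cross0; set p := dotv d (X^T *m r); set q := dotv d x => cross0.
have -> : lambda * (dotv ts ts + dotv d ts + (dotv d ts + dotv d d)) =
  lambda * dotv ts ts + 2 * (lambda * dotv d ts) + lambda * dotv d d by ring.
have -> : lambda * dotv d ts = p + (y - dotv ts x) * q by lra.
ring.
Qed.

Lemma ridge_argmin_unique (y : R) (ts t : 'cV[R]_M) :
  ridge_stationary y ts ->
  is_argmin X Y x lambda y t -> t = ts.
Proof.
move=> stationary t_min; apply/eqP; rewrite -subr_eq0; apply/eqP.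
set d := t - ts; have := t_min ts.
have -> : t = ts + d by rewrite /d addrC subrK.
rewrite ridge_obj_shift // => obj_le.
have := dotv_ge0 (X *m d); have := sqr_ge0 (dotv d x); have := dotv_ge0 d.
move=> d_ge0 dx2_ge0 Xd_ge0.
have : lambda * dotv d d <= 0 by lra.
rewrite pmulr_rle0 // => d_le0.
by apply: dotv_eq0; apply/eqP; rewrite eq_le d_le0 d_ge0.
Qed.

Lemma ridge_argminE (y : R) (t : 'cV[R]_M) :
  is_argmin X Y x lambda y t ->
  t = P *m (X^T *m Y) +
      ((y - dotv (P *m (X^T *m Y)) x) / (1 + dotv x (P *m x))) *: (P *m x).
Proof.
set th := P *m (X^T *m Y); set u := P *m x.
set s := (y - dotv th x) / (1 + dotv x u).
apply: ridge_argmin_unique; rewrite /ridge_stationary.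
have resid : y - dotv (th + s *: u) x = s.
  rewrite dotvDl dotvZl (dotvC u x) /s; field.
  by have := dotv_P_ge0; rewrite -/u; lra.
have Ats : A *m (th + s *: u) = X^T *m Y + s *: x.
  by rewrite mulmxDr -scalemxAr /th /u !mulmxA ridge_mxKP !mul1mx.
rewrite resid mulmxBr mulmxA.
have -> : X^T *m X *m (th + s *: u) = X^T *m Y + s *: x - lambda *: (th + s *: u).
  by rewrite -Ats mulmxDl mul_scalar_mx addrK.
by rewrite opprB addrA opprD addrA subrK addrAC subrr add0r subrr.
Qed.

End RidgeRegression.

Section Gaussian.
Variable R : realType.

Lemma gauss_pdf_normal (m s2 : R) : 0 < s2 ->
  gauss_pdf m s2 = normal_pdf m (Num.sqrt s2).
Proof.
move=> s2_gt0; apply/funext => z.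
rewrite normal_pdfE; last by rewrite gt_eqF // sqrtr_gt0.
rewrite /gauss_pdf /normal_peak /normal_fun sqr_sqrtr ?ltW //.
congr (_ * expR _).
  by rewrite -mulr_natr; congr (_^-1); congr Num.sqrt; ring.
by rewrite -mulr_natr; congr (- _ / _); ring.
Qed.

Lemma normalize_gauss_multiple (f : R -> R) (C m s2 : R) :
  0 < C -> 0 < s2 -> (forall y, f y = C * gauss_pdf m s2 y) ->
  forall y, f y / fine (\int[@lebesgue_measure R]_(y' in [set: R]) (f y')%:E)
            = gauss_pdf m s2 y.
Proof.
move=> C_gt0 s2_gt0 fE y.
under eq_integral do rewrite fE EFinM.
rewrite fE (gauss_pdf_normal _ s2_gt0).
rewrite integralZl //=; last exact: integrable_normal_pdf.
by rewrite integral_normal_pdf mule1 /=; field; rewrite gt_eqF.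
Qed.

(* Completing the square in y: with t = (y - a) / (1 + w), the exponent is
   quadratic in y with leading coefficient -(1 + lambda v) / (2 sigma^2 (1 + w)^2). *)
Lemma gauss_prior_complete_square (a c w v tt lambda sigma : R) :
  0 < lambda -> 0 < sigma -> 0 <= w -> 0 <= v ->
  let t y := (y - a) / (1 + w) in
  exists2 C, 0 < C & forall y,
    gauss_pdf (a + t y * w) (sigma ^+ 2) y *
      expR (- (lambda / (2 * sigma ^+ 2)) * (tt + 2 * t y * c + t y ^+ 2 * v))
    = C * gauss_pdf (a - lambda * (1 + w) * c / (1 + lambda * v))
                    (sigma ^+ 2 * (1 + w) ^+ 2 / (1 + lambda * v)) y.
Proof.
move=> lambda_gt0 sigma_gt0 w_ge0 v_ge0 t.
set m := a - lambda * (1 + w) * c / (1 + lambda * v).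
set s2 := sigma ^+ 2 * (1 + w) ^+ 2 / (1 + lambda * v).
have D_gt0 : 0 < 1 + lambda * v by have := mulr_ge0 (ltW lambda_gt0) v_ge0; lra.
have s2_gt0 : 0 < s2 by rewrite divr_gt0 // mulr_gt0 // exprn_gt0 //; lra.
have sqrt_gt0 (s : R) : 0 < s -> 0 < Num.sqrt (2 * pi * s).
  by move=> s_gt0; rewrite sqrtr_gt0 !mulr_gt0 // pi_gt0.
set Z := - (lambda / (2 * sigma ^+ 2)) * tt
   + lambda ^+ 2 * c ^+ 2 / (2 * sigma ^+ 2 * (1 + lambda * v)).
exists (Num.sqrt (2 * pi * s2) / Num.sqrt (2 * pi * sigma ^+ 2) * expR Z).
  by rewrite mulr_gt0 ?expR_gt0 // divr_gt0 // sqrt_gt0 // exprn_gt0.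
move=> y; rewrite /gauss_pdf -[LHS]mulrA -expRD.
rewrite [X in expR X](_ : _ = Z + (- (y - m) ^+ 2 / (2 * s2))).
  by rewrite expRD; field; rewrite !gt_eqF ?sqrt_gt0 ?exprn_gt0.
rewrite /t /Z /m /s2; field.
by rewrite (gt_eqF D_gt0) (gt_eqF sigma_gt0); have -> : 1 + w != 0 by lra.
Qed.

End Gaussian.

Theorem mainTheorem10 (R : realType) (N M : nat) (X : 'M[R]_(N, M))
  (Y : 'cV[R]_N) (x : 'cV[R]_M) (lambda sigma : R)
  (hlambda : 0 < lambda) (hsigma : 0 < sigma)
  (thy : R -> 'cV[R]_M)
  (hthy : forall y : R, is_argmin X Y x lambda y (thy y)) :
  let P := P_lam X lambda in
  let K := 1 + dotv x (P *m x) in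
  let th := P *m (X^T *m Y) in
  let D := 1 + lambda * dotv x (P *m (P *m x)) in
  let muhat := lambda * K * dotv th (P *m x) / D in
  let s2hat := sigma ^+ 2 * K ^+ 2 / D in
  forall y : R, q_LpNML sigma lambda x thy y = gauss_pdf (dotv th x - muhat) s2hat y.
Proof.
move=> P K th D muhat s2hat.
have PPE : dotv x (P *m (P *m x)) = dotv (P *m x) (P *m x).
  by rewrite dotvC dotv_mulmx P_lam_tr.
have [C C_gt0 numE] := gauss_prior_complete_square (dotv th x) (dotv th (P *m x))
  (dotv th th) hlambda hsigma (dotv_P_ge0 X x hlambda) (dotv_ge0 (P *m x)).
have K_gt0 : 0 < K by have := dotv_P_ge0 X x hlambda; rewrite /K; lra.
have D_gt0 : 0 < D.
  by rewrite /D PPE; have := mulr_ge0 (ltW hlambda) (dotv_ge0 (P *m x)); lra.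
apply: normalize_gauss_multiple C_gt0 _ _ => [|y].
  by rewrite /s2hat divr_gt0 // mulr_gt0 // exprn_gt0.
rewrite /muhat /s2hat /D /K PPE -numE (ridge_argminE hlambda (hthy y)) -/P -/th.
by rewrite /p_model /wprior dotv_addZ_sqr dotvDl dotvZl (dotvC (P *m x)).
Qed.
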